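(* Let $A=(a^k)_{k\in[n]}$ be a finite collection (multiset) of points of $[0,1]^2$. For every two average fixed points $x,y$ of $A$, either $x\le\le y$ or $y\le\le x$.
   Context: For vectors, $x\le\le y$ means $x_1\le y_1$ and $x_2\le y_2$. For a finite nonempty multiset $B$, $\operatorname{avg}(B)$ is the arithmetic mean of its elements (with multiplicity). For $x\in[0,1]^2$: $A_{<,<}(x)=\{a\in A:a_1<x_1,a_2<x_2\}$ and $A_{\le,\le}(x)=\{a\in A:a_1\le x_1,a_2\le x_2\}$ (sub-multisets). A point $x$ is an average fixed point of $A$ if there exists a sub-multiset $B\subseteq A_{\le,\le}(x)\setminus A_{<,<}(x)$ such that $\operatorname{avg}\big((A\setminus A_{\le,\le}(x))\cup B\big)=x$. *)

From HB Require Import structures.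
From mathcomp Require Import all_boot all_order all_algebra.
Set Implicit Arguments. Unset Strict Implicit. Unset Printing Implicit Defensive.
Import Order.TTheory GRing.Theory Num.Theory.
Local Open Scope ring_scope.

Definition le2 (R : realFieldType) (x y : R * R) : bool :=
  (x.1 <= y.1) && (x.2 <= y.2).

Definition lt2 (R : realFieldType) (x y : R * R) : bool :=
  (x.1 < y.1) && (x.2 < y.2).

Definition in_unit_sq (R : realFieldType) (x : R * R) : Prop :=
  0 <= x.1 <= 1 /\ 0 <= x.2 <= 1.

(* The multiset A is given as a family a : 'I_n -> R*R (with multiplicity);
   sub-multisets are sets of indices S : {set 'I_n}.
   avg a S = arithmetic mean of the points a k, k in S. *)
Definition avg (R : realFieldType) (n : nat) (a : 'I_n -> R * R)
    (S : {set 'I_n}) : R * R :=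
  ((\sum_(k in S) (a k).1) / #|S|%:R, (\sum_(k in S) (a k).2) / #|S|%:R).

Definition Ale (R : realFieldType) (n : nat) (a : 'I_n -> R * R) (x : R * R)
  : {set 'I_n} := [set k | le2 (a k) x].

Definition Alt (R : realFieldType) (n : nat) (a : 'I_n -> R * R) (x : R * R)
  : {set 'I_n} := [set k | lt2 (a k) x].

Definition avg_fixed_point (R : realFieldType) (n : nat) (a : 'I_n -> R * R)
    (x : R * R) : Prop :=
  in_unit_sq x /\
  exists B : {set 'I_n},
    B \subset (Ale a x :\: Alt a x) /\
    (~: Ale a x) :|: B != set0 /\
    avg a ((~: Ale a x) :|: B) = x.

From HB Require Import structures.
From mathcomp Require Import all_boot all_order all_algebra.
From mathcomp Require Import ring lra.
Import Order.TTheory GRing.Theory Num.Theory.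
Local Open Scope ring_scope.

(* An average fixed point x is the mean of a nonempty set C_x of points such
   that every point outside C_x is <=<= x and no point of C_x is << x.
   Suppose x and y are fixed points with x.1 < y.1 and y.2 < x.2.  Every point
   of C_y outside C_x is <=<= x, and every point of C_x outside C_y is <=<= y
   but not << x, so its second coordinate is < x.2 and its first one is
   therefore >= x.1.  Since the first coordinates over C_x average to x.1,
   those over C_y average to at most x.1 < y.1, a contradiction. *)

Section Means.

Variables (R : realFieldType) (I : finType).

Lemma sumr_sub_mean (S : {set I}) (f : I -> R) :
  S != set0 -> \sum_(k in S) (f k - (\sum_(j in S) f j) / #|S|%:R) = 0.
Proof.
move=> S0; have cS : #|S|%:R != 0 :> R by rewrite pnatr_eq0 -lt0n card_gt0.
by rewrite sumrB sumr_const -[_ *+ #|S|]mulr_natr divfK // subrr.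
Qed.

Lemma sum_le0_of_balanced (g : I -> R) (C D : {set I}) :
  \sum_(k in C) g k = 0 ->
  {in C :\: D, forall k, 0 <= g k} -> {in ~: C, forall k, g k <= 0} ->
  \sum_(k in D) g k <= 0.
Proof.
move=> sumC geC leC.
have sumCD : \sum_(k in D :&: C) g k = - \sum_(k in C :\: D) g k.
  by apply/eqP; rewrite -subr_eq0 opprK setIC -big_setID sumC.
have geCD : 0 <= \sum_(k in C :\: D) g k by apply: sumr_ge0.
have leDC : \sum_(k in D :\: C) g k <= 0.
  by apply: sumr_le0 => k; rewrite inE => /andP[kC _]; apply: leC; rewrite inE.
rewrite (big_setID C) /= sumCD; lra.
Qed.

Lemma balanced_means_mono (f : I -> R) (C D : {set I}) (x y : R) :
  \sum_(k in C) (f k - x) = 0 -> \sum_(k in D) (f k - y) = 0 -> D != set0 ->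
  {in C :\: D, forall k, x <= f k} -> {in ~: C, forall k, f k <= x} ->
  y <= x.
Proof.
move=> sumC sumD D0 geC leC.
have : \sum_(k in D) (f k - x) <= 0.
  by apply: sum_le0_of_balanced sumC _ _ => k kC;
    rewrite ?subr_ge0 ?subr_le0 ?geC ?leC.
have -> : \sum_(k in D) (f k - x) = \sum_(k in D) (f k - y) + (y - x) *+ #|D|.
  by rewrite -sumr_const -big_split; apply: eq_bigr => k _ /=; ring.
by rewrite sumD add0r -mulr_natr pmulr_lle0 ?subr_le0 // ltr0n card_gt0.
Qed.

End Means.

Lemma avg_fixed_pointP (R : realFieldType) (n : nat) (a : 'I_n -> R * R)
    (x : R * R) :
  avg_fixed_point a x -> exists2 C : {set 'I_n}, C != set0 &
    [/\ \sum_(k in C) ((a k).1 - x.1) = 0,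
        {in ~: C, forall k, le2 (a k) x} & {in C, forall k, ~~ lt2 (a k) x}].
Proof.
move=> [_ [B [sB [C0 avgC]]]]; exists ((~: Ale a x) :|: B) => //.
set C := _ :|: B in C0 avgC *.
split => [|k|k]; rewrite ?inE.
- by rewrite -avgC sumr_sub_mean.
- by rewrite negb_or negbK => /andP[].
case/orP => [|kB]; last by have := subsetP sB k kB; rewrite !inE => /andP[].
by apply: contra => /andP[h1 h2]; rewrite /le2 !ltW.
Qed.

Lemma avg_fixed_point_no_cross (R : realFieldType) (n : nat)
    (a : 'I_n -> R * R) (x y : R * R) :
  avg_fixed_point a x -> avg_fixed_point a y -> x.1 < y.1 -> x.2 <= y.2.
Proof.
move=> /avg_fixed_pointP[Cx _ [sumx1 outx inx]].
move=> /avg_fixed_pointP[Cy Cy0 [sumy1 outy _]] xy1.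
rewrite leNgt; apply: contraTN xy1 => yx2; rewrite -leNgt.
apply: balanced_means_mono sumx1 sumy1 Cy0 _ _ => k; last by move/outx/andP=> [].
rewrite inE => /andP[kCy kCx].
have /andP[_ ky2] : le2 (a k) y by apply: outy; rewrite inE.
by have := inx k kCx; rewrite /lt2 (le_lt_trans ky2 yx2) andbT -leNgt.
Qed.

Lemma le2_total_of_no_cross (R : realFieldType) (x y : R * R) :
  (x.1 < y.1 -> x.2 <= y.2) -> (y.1 < x.1 -> y.2 <= x.2) ->
  le2 x y \/ le2 y x.
Proof.
rewrite /le2; case: ltgtP => [_ h _|_ _ h|_ _ _] /=.
- by left; rewrite h.
- by right; rewrite h.
- by case: (leP x.2 y.2) => h; [left | right; rewrite ltW].
Qed.

Theorem lemma2 (R : realFieldType) (n : nat) (a : 'I_n -> R * R)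
  (ha : forall k, in_unit_sq (a k)) (x y : R * R) :
  avg_fixed_point a x -> avg_fixed_point a y -> le2 x y \/ le2 y x.
Proof.
move=> fx fy; apply: le2_total_of_no_cross.
- exact: avg_fixed_point_no_cross fx fy.
- exact: avg_fixed_point_no_cross fy fx.
Qed.
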